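(* Let $\widehat Z\in\mathbb C^{dn_1\times dn_2}$ be a fixed block diagonal matrix and let $\Omega$ follow the Bernoulli model with parameter $p\in(0,1]$. Then with high probability $$\Big\|\Big(\tfrac1p\widehat{\mathcal G}\mathcal P_\Omega\widehat{\mathcal G}^*-\widehat{\mathcal G}\widehat{\mathcal G}^*\Big)\widehat Z\Big\|\le C\Big(\sqrt{\tfrac{\log(dn)}{p}}\,\|\widehat Z\|_{\widehat{\mathcal G},F}+\tfrac{\log(dn)}{p}\,\|\widehat Z\|_{\widehat{\mathcal G},\infty}\Big),$$ where $\|\cdot\|$ is the spectral norm and $C>0$ is an absolute constant.
   Context: Let $d,n\ge1$ with $n$ odd and $n_1=n_2=(n+1)/2$. For $a\in[n]$, $w_a=\#\{(j,k)\in[n_1]\times[n_2]:j+k=a+1\}$, $G_a=w_a^{-1/2}\sum_{j+k=a+1}e_je_k^{\mathsf T}$, $\mathcal G(x)=\sum_ax_aG_a$. $F$ is the $d\times d$ unitary DFT matrix. $\widehat{\mathcal G}$ maps $X\in\mathbb C^{d\times n}$ to the block diagonal matrix ($d$ blocks of size $n_1\times n_2$) whose $i$-th block is $\mathcal G$ of the $i$-th row of $FX$; $\widehat{\mathcal G}^*$ is its adjoint w.r.t. $\langle A,B\rangle=\mathrm{tr}(AB^{\mathsf H})$. $\widehat G_{j,k}=\widehat{\mathcal G}(e_je_k^{\mathsf T})=\mathrm{diag}(F_{1j}G_k,\dots,F_{dj}G_k)$. $\|\widehat Z\|_{\widehat{\mathcal G},F}=\big(\sum_{(j,k)\in[d]\times[n]}\frac1{dw_k}|\langle\widehat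 Z,\widehat G_{j,k}\rangle|^2\big)^{1/2}$ and $\|\widehat Z\|_{\widehat{\mathcal G},\infty}=\max_{(j,k)}\frac1{\sqrt{dw_k}}|\langle\widehat Z,\widehat G_{j,k}\rangle|$. $\mathcal P_\Omega$ keeps entries in $\Omega$ and zeroes the rest; Bernoulli model: each index in $\Omega$ independently with probability $p$. ''With high probability'': probability at least $1-c_1(dn)^{-c_2}$ for absolute constants $c_1,c_2>0$. *)

From Stdlib Require Import Reals ClassicalEpsilon.
From mathcomp Require Import all_boot.
Set Implicit Arguments. Unset Strict Implicit. Unset Printing Implicit Defensive.

Local Open Scope R_scope.

Record Cx := mkCx { Re : R; Im : R }.
Definition C0 : Cx := mkCx 0 0.
Definition C1 : Cx := mkCx 1 0.
Definition RtoC (x : R) : Cx := mkCx x 0.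
Definition Cadd (a b : Cx) : Cx := mkCx (Re a + Re b) (Im a + Im b).
Definition Copp (a : Cx) : Cx := mkCx (- Re a) (- Im a).
Definition Csub (a b : Cx) : Cx := Cadd a (Copp b).
Definition Cmul (a b : Cx) : Cx :=
  mkCx (Re a * Re b - Im a * Im b) (Re a * Im b + Im a * Re b).
Definition Cconj (a : Cx) : Cx := mkCx (Re a) (- Im a).
Definition Cnorm2 (a : Cx) : R := Re a * Re a + Im a * Im a.
Definition Cabs (a : Cx) : R := sqrt (Cnorm2 a).
Definition Cexpi (t : R) : Cx := mkCx (cos t) (sin t).

Definition Csum (T : finType) (f : T -> Cx) : Cx := \big[Cadd/C0]_(t : T) f t.
Definition Rsum (T : finType) (f : T -> R) : R := \big[Rplus/0]_(t : T) f t.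
Definition Rmaxf (T : finType) (f : T -> R) : R := \big[Rmax/0]_(t : T) f t.

Definition mat (I J : finType) := I -> J -> Cx.
Definition vec (I : finType) := I -> Cx.
Definition mat_vec (I J : finType) (A : mat I J) (v : vec J) : vec I :=
  fun i => Csum (fun j => Cmul (A i j) (v j)).
Definition vnorm (I : finType) (v : vec I) : R := sqrt (Rsum (fun i => Cnorm2 (v i))).
Definition minner (I J : finType) (A B : mat I J) : Cx :=
  Csum (fun ij : (I * J)%type => Cmul (A ij.1 ij.2) (Cconj (B ij.1 ij.2))).
Definition madd (I J : finType) (A B : mat I J) : mat I J := fun i j => Cadd (A i j) (B i j).
Definition msub (I J : finType) (A B : mat I J) : mat I J := fun i j => Csub (A i j) (B i j).
Definition mscale (I J : finType) (c : Cx) (A : mat I J) : mat I J := fun i j => Cmul c (A i j).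
Definition spec_norm_le (I J : finType) (A : mat I J) (r : R) : Prop :=
  forall v : vec J, vnorm (mat_vec A v) <= r * vnorm v.

(* n1 = n2 = (n+1)/2 ; all indices are 0-based *)
Definition n1 (n : nat) : nat := (n.+1)./2.

(* w_a = #{(j,k) in [n1]x[n2] : j+k = a}  (0-based version of j+k=a+1) *)
Definition wgt (n : nat) (a : 'I_n) : nat :=
  #|[set jk : ('I_(n1 n) * 'I_(n1 n))%type | (jk.1 + jk.2 == a)%N]|.

Definition Gmat (n : nat) (a : 'I_n) : mat 'I_(n1 n) 'I_(n1 n) :=
  fun j k => if (j + k == a)%N then RtoC (/ sqrt (INR (wgt a))) else C0.

Definition DFT (d : nat) (i j : 'I_d) : Cx :=
  Cmul (RtoC (/ sqrt (INR d))) (Cexpi (- 2 * PI * INR (i * j)%N / INR d)).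

(* block diagonal matrices in C^{d n1 x d n2}: rows indexed by (block, row),
   columns by (block, column) *)
Definition bmat (d n : nat) := mat (('I_d * 'I_(n1 n))%type) (('I_d * 'I_(n1 n))%type).
Definition is_block_diag (d n : nat) (Z : bmat d n) : Prop :=
  forall x y, x.1 <> y.1 -> Z x y = C0.

(* \hat G : C^{d x n} -> block diagonal matrices;
   i-th block is G(i-th row of F X) = sum_a (F X)_{i a} G_a *)
Definition Ghat (d n : nat) (X : mat 'I_d 'I_n) : bmat d n :=
  fun x y =>
    if x.1 == y.1 then
      Csum (fun a : 'I_n =>
              Cmul (Csum (fun j : 'I_d => Cmul (DFT x.1 j) (X j a)))
                   (Gmat a x.2 y.2))
    else C0.

Definition Ejk (d n : nat) (j : 'I_d) (k : 'I_n) : mat 'I_d 'I_n :=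
  fun j' k' => if (j' == j) && (k' == k) then C1 else C0.

Definition Ghat_jk (d n : nat) (j : 'I_d) (k : 'I_n) : bmat d n := Ghat (Ejk j k).

(* adjoint of \hat G w.r.t. <A,B> = tr(A B^H):
   (\hat G^* B)_{jk} = <B, \hat G_{j,k}> *)
Definition Ghat_adj (d n : nat) (B : bmat d n) : mat 'I_d 'I_n :=
  fun j k => minner B (Ghat_jk j k).

Definition POm (d n : nat) (Om : {set ('I_d * 'I_n)%type}) (X : mat 'I_d 'I_n) : mat 'I_d 'I_n :=
  fun j k => if (j, k) \in Om then X j k else C0.

Definition dev_op (d n : nat) (p : R) (Om : {set ('I_d * 'I_n)%type}) (Z : bmat d n) : bmat d n :=
  msub (mscale (RtoC (/ p)) (Ghat (POm Om (Ghat_adj Z)))) (Ghat (Ghat_adj Z)).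

Definition normGF (d n : nat) (Z : bmat d n) : R :=
  sqrt (Rsum (fun jk : ('I_d * 'I_n)%type =>
     / (INR d * INR (wgt jk.2)) * Cnorm2 (minner Z (Ghat_jk jk.1 jk.2)))).
Definition normGinf (d n : nat) (Z : bmat d n) : R :=
  Rmaxf (fun jk : ('I_d * 'I_n)%type =>
     / sqrt (INR d * INR (wgt jk.2)) * Cabs (minner Z (Ghat_jk jk.1 jk.2))).

Definition indic (P : Prop) : R :=
  if excluded_middle_informative P then 1 else 0.
(* probability that Omega (each (j,k) in [d]x[n] independently with prob p)
   satisfies E *)
Definition bern_prob (d n : nat) (p : R) (E : {set ('I_d * 'I_n)%type} -> Prop) : R :=
  \big[Rplus/0]_(Om : {set ('I_d * 'I_n)%type})
     (p ^ #|Om| * (1 - p) ^ ((d * n)%N - #|Om|)%N * indic (E Om)).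

(* In every diagonal block, ((1/p) Ghat P_Om Ghat^H - Ghat Ghat^H) Zhat is the n1 x n1
   Hankel matrix of a symbol h : [n] -> C whose entries are sums of independent centered
   terms (1{(j,a) in Om}/p - 1) <Zhat, Ghat_{j,a}>, weighted by DFT entries.  Since
   n = 2 n1 - 1, the Hankel matrix is a block of an n x n circulant, so its spectral norm
   is at most the largest modulus of the length-n DFT of h.  Each DFT coefficient is again a
   centered Bernoulli sum, with variance proxy ||Zhat||_{G,F}^2 / p and range
   ||Zhat||_{G,oo} / p.  Bernstein's inequality bounds the real and imaginary parts of each
   coefficient except with probability (dn)^-3, and a union bound over the 4 d n parts gives
   the claim with C = 9, c1 = 4, c2 = 2. *)

Set Warnings "-notation-overridden,-ambiguous-paths,-redundant-canonical-projection".
From Pilot Require (* Stdlib also exports a [C1]; re-importing Defs makes [C1] the complex unit again. *)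
Import Defs.
From Stdlib Require Import Reals Lra Lia Psatz ZArith Classical ClassicalEpsilon.
From HB Require Import structures.
From mathcomp Require Import all_boot ssralg Rstruct zify.
Import Defs.
Set Implicit Arguments. Unset Strict Implicit. Unset Printing Implicit Defensive.
Local Open Scope R_scope.

Lemma Cx_ext (a b : Cx) : Re a = Re b -> Im a = Im b -> a = b.
Proof. by case: a b => ?? [??] /= -> ->. Qed.

Ltac Cring := apply: Cx_ext => /=; ring.

Lemma CaddA : associative Cadd.  Proof. by move=> ???; Cring. Qed.
Lemma CaddC : commutative Cadd.  Proof. by move=> ??; Cring. Qed.
Lemma Cadd0l : left_id C0 Cadd.  Proof. by move=> ?; Cring. Qed.
Lemma CmulA : associative Cmul.  Proof. by move=> ???; Cring. Qed.
Lemma CmulC : commutative Cmul.  Proof. by move=> ??; Cring. Qed.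
Lemma Cmul1l : left_id C1 Cmul.  Proof. by move=> ?; Cring. Qed.
Lemma Cmul0l a : Cmul C0 a = C0.  Proof. by Cring. Qed.
Lemma Cmul0r a : Cmul a C0 = C0.  Proof. by Cring. Qed.
Lemma CmulDl : left_distributive Cmul Cadd.  Proof. by move=> ???; Cring. Qed.
Lemma CmulDr : right_distributive Cmul Cadd.  Proof. by move=> ???; Cring. Qed.

HB.instance Definition _ := Monoid.isComLaw.Build Cx C0 Cadd CaddA CaddC Cadd0l.
HB.instance Definition _ := Monoid.isComLaw.Build Cx C1 Cmul CmulA CmulC Cmul1l.
HB.instance Definition _ := Monoid.isMulLaw.Build Cx C0 Cmul Cmul0l Cmul0r.
HB.instance Definition _ := Monoid.isAddLaw.Build Cx Cmul Cadd CmulDl CmulDr.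

Lemma Cconj_add a b : Cconj (Cadd a b) = Cadd (Cconj a) (Cconj b).
Proof. by Cring. Qed.
Lemma Cconj_mul a b : Cconj (Cmul a b) = Cmul (Cconj a) (Cconj b).
Proof. by Cring. Qed.
Lemma Cconj_sum (I : finType) (F : I -> Cx) :
  Cconj (\big[Cadd/C0]_i F i) = \big[Cadd/C0]_i Cconj (F i).
Proof. by apply: (big_morph Cconj Cconj_add (_ : Cconj C0 = C0)); Cring. Qed.
Lemma Copp_sum (I : finType) (F : I -> Cx) :
  Copp (\big[Cadd/C0]_i F i) = \big[Cadd/C0]_i Copp (F i).
Proof.
have Copp_add a b : Copp (Cadd a b) = Cadd (Copp a) (Copp b) by Cring.
by apply: (big_morph Copp Copp_add (_ : Copp C0 = C0)); Cring.
Qed.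
Lemma Re_sum (I : finType) (F : I -> Cx) :
  Re (\big[Cadd/C0]_i F i) = \big[Rplus/0]_i Re (F i).
Proof. exact: (big_morph Re). Qed.
Lemma Im_sum (I : finType) (F : I -> Cx) :
  Im (\big[Cadd/C0]_i F i) = \big[Rplus/0]_i Im (F i).
Proof. exact: (big_morph Im). Qed.

Lemma Cnorm2E z : Cnorm2 z = Re (Cmul z (Cconj z)).
Proof. rewrite /Cnorm2 /=; ring. Qed.
Lemma Cnorm2_mul a b : Cnorm2 (Cmul a b) = Cnorm2 a * Cnorm2 b.
Proof. rewrite /Cnorm2 /=; ring. Qed.
Lemma Cnorm2_RtoC x : Cnorm2 (RtoC x) = x * x.
Proof. rewrite /Cnorm2 /=; ring. Qed.
Lemma Cnorm2_expi t : Cnorm2 (Cexpi t) = 1.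
Proof. rewrite /Cnorm2 /=; have := sin2_cos2 t; rewrite /Rsqr; lra. Qed.
Lemma Cnorm2_ge0 z : 0 <= Cnorm2 z.
Proof. rewrite /Cnorm2; nra. Qed.

Lemma Cnorm2_eq0 z : Cnorm2 z = 0 -> z = C0.
Proof. by case: z => x y; rewrite /Cnorm2 /= => H; apply: Cx_ext => /=; nra. Qed.

Lemma Cmul_eq0_nz w s : w <> C0 -> Cmul w s = C0 -> s = C0.
Proof.
move=> Hw /(congr1 Cnorm2); rewrite Cnorm2_mul => H.
apply: Cnorm2_eq0; have Hw2 : Cnorm2 w <> 0 by move/Cnorm2_eq0.
by move: H; rewrite /Cnorm2 /= Rmult_0_r Rplus_0_r => /Rmult_integral [].
Qed.

Lemma Re_le_Cabs z : Rabs (Re z) <= Cabs z.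
Proof.
rewrite -sqrt_Rsqr_abs /Cabs; apply: sqrt_le_1_alt; rewrite /Rsqr /Cnorm2; nra.
Qed.
Lemma Im_le_Cabs z : Rabs (Im z) <= Cabs z.
Proof.
rewrite -sqrt_Rsqr_abs /Cabs; apply: sqrt_le_1_alt; rewrite /Rsqr /Cnorm2; nra.
Qed.

Lemma Rsum_le (I : finType) (P : pred I) (F G : I -> R) :
  (forall i, P i -> F i <= G i) ->
  \big[Rplus/0]_(i | P i) F i <= \big[Rplus/0]_(i | P i) G i.
Proof. by move=> H; apply: (big_ind2 (fun x y => x <= y)) => // *; lra. Qed.

Lemma Rsum_ge0 (I : finType) (P : pred I) (F : I -> R) :
  (forall i, P i -> 0 <= F i) -> 0 <= \big[Rplus/0]_(i | P i) F i.
Proof. by move=> H; apply: (big_ind (fun x => 0 <= x)) => // *; lra. Qed.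

(* [big_distrr] restated with the plain [Rmult], which [lra] and [ring] recognise. *)
Lemma Rsum_mull (I : finType) (P : pred I) (F : I -> R) c :
  c * \big[Rplus/0]_(i | P i) F i = \big[Rplus/0]_(i | P i) (c * F i).
Proof. exact: big_distrr. Qed.

Lemma Rsum_widen_le (K N : nat) (F : nat -> R) : (K <= N)%nat -> (forall i, 0 <= F i) ->
  \big[Rplus/0]_(r < K) F r <= \big[Rplus/0]_(r < N) F r.
Proof.
move=> Hle H0; rewrite (big_ord_widen _ F Hle) big_mkcond.
by apply: Rsum_le => i _; case: ifP => _; [lra | exact: H0].
Qed.

Lemma Rsum_const (I : finType) c : \big[Rplus/0]_(i : I) c = INR #|I| * c.
Proof.
rewrite big_const; elim: #|I| => [|k IH]; first by rewrite /= Rmult_0_l.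
by rewrite iterS IH S_INR; ring.
Qed.

Lemma Rprod_ge0 (T : finType) (F : T -> R) : (forall x, 0 <= F x) ->
  0 <= \big[Rmult/1]_(x : T) F x.
Proof. by move=> H; apply: (big_ind (fun x => 0 <= x)) => // *; [lra | nra]. Qed.

Lemma Rprod_le (T : finType) (F G : T -> R) : (forall x, 0 <= F x <= G x) ->
  \big[Rmult/1]_(x : T) F x <= \big[Rmult/1]_(x : T) G x.
Proof.
move=> H; suff [] : 0 <= \big[Rmult/1]_(x : T) F x <= \big[Rmult/1]_(x : T) G x by [].
apply: (big_ind2 (fun a b => 0 <= a <= b)); first lra.
  by move=> a b c e [? ?] [? ?]; split; [nra | apply: Rmult_le_compat; lra].
by move=> x _; apply: H.
Qed.

Lemma exp_Rsum (T : finType) (F : T -> R) :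
  exp (\big[Rplus/0]_(x : T) F x) = \big[Rmult/1]_(x : T) exp (F x).
Proof. exact: (big_morph exp exp_plus exp_0). Qed.

Lemma Rprod_mul (T : finType) (F G : T -> R) :
  \big[Rmult/1]_(x : T) F x * \big[Rmult/1]_(x : T) G x = \big[Rmult/1]_(x : T) (F x * G x).
Proof. by rewrite big_split. Qed.

Lemma Rsum_set_prod (T : finType) (F G : T -> R) :
  \big[Rplus/0]_(Om : {set T}) \big[Rmult/1]_(x : T) (if x \in Om then F x else G x)
  = \big[Rmult/1]_(x : T) (F x + G x).
Proof. by rewrite bigA_distr. Qed.

Lemma big_pair (R : Type) (idx : R) (op : Monoid.com_law idx) (I J : finType)
    (F : I * J -> R) :
  \big[op/idx]_(y : I * J) F y = \big[op/idx]_(i : I) \big[op/idx]_(j : J) F (i, j).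
Proof. by rewrite (pair_bigA _ (fun i j => F (i, j))); apply: eq_bigr => -[]. Qed.

Lemma big_ord_pick K (F : 'I_K -> Cx) (s : 'I_K) :
  \big[Cadd/C0]_(o : 'I_K) (if (o : nat) == s then F o else C0) = F s.
Proof.
rewrite (bigD1 s) //= eqxx big1; first by Cring.
by move=> o Ho; case: eqP => // /val_inj Eo; rewrite Eo eqxx in Ho.
Qed.

Lemma big_ord_delta K c (F : nat -> Cx) x : (c < K)%nat ->
  \big[Cadd/C0]_(a < K) Cmul (F a) (if (a : nat) == c then RtoC x else C0)
  = Cmul (F c) (RtoC x).
Proof.
move=> Hc; rewrite -(big_ord_pick (fun a : 'I_K => Cmul (F a) (RtoC x)) (Ordinal Hc)).
by apply: eq_bigr => a _; case: eqP => _ //; Cring.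
Qed.

(** * Roots of unity of odd order *)

Definition root_unity (N k : nat) : Cx := Cexpi (2 * PI * INR k / INR N).

Lemma root_unity0 N : root_unity N 0 = C1.
Proof. by rewrite /root_unity /Cexpi /= Rmult_0_r /Rdiv Rmult_0_l cos_0 sin_0. Qed.

Lemma root_unityD N a b : (0 < N)%nat ->
  root_unity N (a + b) = Cmul (root_unity N a) (root_unity N b).
Proof.
move=> HN; have HN' : INR N <> 0 by apply: not_0_INR; lia.
rewrite /root_unity /Cexpi plus_INR.
have -> : 2 * PI * (INR a + INR b) / INR N =
          2 * PI * INR a / INR N + 2 * PI * INR b / INR N by field.
by apply: Cx_ext => /=; [rewrite cos_plus | rewrite sin_plus]; ring.
Qed.

Lemma root_unity_mulN N k : (0 < N)%nat -> root_unity N (N * k) = C1.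
Proof.
move=> HN; have HN' : INR N <> 0 by apply: not_0_INR; lia.
rewrite /root_unity /Cexpi.
have -> : 2 * PI * INR (N * k) / INR N = 0 + 2 * INR k * PI.
  by rewrite mult_INR; field.
by rewrite cos_period sin_period cos_0 sin_0.
Qed.

Lemma root_unity_normC N k : Cmul (root_unity N k) (Cconj (root_unity N k)) = C1.
Proof.
apply: Cx_ext => /=; last ring.
by have := Cnorm2_expi (2 * PI * INR k / INR N); rewrite /Cnorm2 /=; lra.
Qed.

Lemma odd_halfE N : odd N -> N = (N./2 + N./2).+1.
Proof. by move=> H; rewrite -[in LHS](odd_double_half N) H addnn. Qed.

Lemma sin_root_angle_neq0 N a b : odd N -> (a < N)%nat -> (b < N)%nat -> a <> b ->
  sin (2 * PI * INR a / INR N - 2 * PI * INR b / INR N) <> 0.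
Proof.
move=> Ho Ha Hb Hab /sin_eq_0_0 [k Hk].
have HN : 0 < INR N by apply: lt_0_INR; rewrite (odd_halfE Ho); lia.
have HPI := PI_RGT_0.
have E1 : 2 * (INR a - INR b) = IZR k * INR N.
  apply: (Rmult_eq_reg_r (PI / INR N)); last by apply: Rgt_not_eq; apply: Rdiv_lt_0_compat.
  rewrite [LHS](_ : _ = 2 * PI * INR a / INR N - 2 * PI * INR b / INR N); last by field; lra.
  by rewrite Hk; field; lra.
rewrite !INR_IZR_INZ -minus_IZR -!mult_IZR in E1.
move/eq_IZR: E1; move: Ha Hb; rewrite (odd_halfE Ho) => Ha Hb E2.
set q := N./2 in Ha Hb E2; clear -Ha Hb Hab E2.
have : (k = 0 \/ k = 1 \/ k = -1 \/ k >= 2 \/ k <= -2)%Z by lia.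
by case=> [|[|[|[]]]] Hk; try (subst k; lia); nia.
Qed.

Fixpoint Cpow (z : Cx) (k : nat) : Cx :=
  if k is k'.+1 then Cmul (Cpow z k') z else C1.

Lemma Cpow_geom z K :
  Cmul (Csub z C1) (\big[Cadd/C0]_(r < K) Cpow z r) = Csub (Cpow z K) C1.
Proof.
elim: K => [|K IH]; first by rewrite big_ord0; Cring.
by rewrite big_ord_recr /= CmulDr IH; Cring.
Qed.

Lemma Csum_C1 K : \big[Cadd/C0]_(r < K) C1 = RtoC (INR K).
Proof.
elim: K => [|K IH]; first by rewrite big_ord0; Cring.
by rewrite big_ord_recr IH S_INR; Cring.
Qed.

Lemma Cpow_root_unity N a b r : (0 < N)%nat ->
  Cpow (Cmul (root_unity N a) (Cconj (root_unity N b))) r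
  = Cmul (root_unity N (a * r)) (Cconj (root_unity N (b * r))).
Proof.
move=> HN; elim: r => [|r IH]; first by rewrite !muln0 root_unity0; Cring.
by rewrite /= IH !mulnS !root_unityD // !Cconj_mul; Cring.
Qed.

Lemma root_unity_orthogonal N a b : odd N -> (a < N)%nat -> (b < N)%nat ->
  \big[Cadd/C0]_(r < N) Cmul (root_unity N (a * r)) (Cconj (root_unity N (b * r)))
  = if a == b then RtoC (INR N) else C0.
Proof.
move=> Ho Ha Hb; have HN : (0 < N)%nat by rewrite (odd_halfE Ho).
case: eqP => [<-|Hab].
  by rewrite -Csum_C1; apply: eq_bigr => r _; apply: root_unity_normC.
set z := Cmul (root_unity N a) (Cconj (root_unity N b)).
rewrite (eq_bigr (fun r : 'I_N => Cpow z r)); last by move=> r _; rewrite Cpow_root_unity.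
apply: (@Cmul_eq0_nz (Csub z C1)).
  move=> /(congr1 Im); rewrite /z /root_unity /Cexpi /= => H.
  by apply: (sin_root_angle_neq0 Ho Ha Hb Hab); rewrite sin_minus; lra.
rewrite Cpow_geom /z Cpow_root_unity // [(a * N)%nat]mulnC [(b * N)%nat]mulnC.
by rewrite !root_unity_mulN //; Cring.
Qed.

(** * The norm of a Hankel matrix *)

Definition dft (N : nat) (h : nat -> Cx) (m : nat) : Cx :=
  \big[Cadd/C0]_(a < N) Cmul (h a) (root_unity N (a * m)).

Definition idft (N : nat) (z : nat -> Cx) (r : nat) : Cx :=
  \big[Cadd/C0]_(m < N) Cmul (z m) (Cconj (root_unity N (r * m))).

Definition zero_ext (K : nat) (v : nat -> Cx) (s : nat) : Cx := if (s < K)%nat then v s else C0.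

Section Hankel.

Variables (N K : nat).
Hypotheses (HoN : odd N) (HKN : (K + K = N.+1)%nat).

Let HN : (0 < N)%nat. Proof. by rewrite (odd_halfE HoN). Qed.

Lemma idft_parseval (z : nat -> Cx) :
  \big[Rplus/0]_(r < N) Cnorm2 (idft N z r) = INR N * \big[Rplus/0]_(m < N) Cnorm2 (z m).
Proof.
under eq_bigr => r _ do rewrite Cnorm2E /idft Cconj_sum.
rewrite -Re_sum.
transitivity (Re (\big[Cadd/C0]_(m < N) \big[Cadd/C0]_(m' < N)
   Cmul (Cmul (z m) (Cconj (z m')))
     (\big[Cadd/C0]_(r < N) Cmul (root_unity N (m' * r)) (Cconj (root_unity N (m * r)))))).
  congr Re.
  transitivity (\big[Cadd/C0]_(r < N) \big[Cadd/C0]_(m < N) \big[Cadd/C0]_(m' < N)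
     Cmul (Cmul (z m) (Cconj (z m')))
          (Cmul (root_unity N (m' * r)) (Cconj (root_unity N (m * r))))).
    apply: eq_bigr => r _; rewrite big_distrl; apply: eq_bigr => m _.
    rewrite big_distrr; apply: eq_bigr => m' _.
    rewrite Cconj_mul [(r * m)%nat]mulnC [(r * m')%nat]mulnC.
    by move: (z m) (z m') (root_unity _ _) (root_unity _ _) => [? ?] [? ?] [? ?] [? ?]; Cring.
  rewrite exchange_big; apply: eq_bigr => m _.
  by rewrite exchange_big; apply: eq_bigr => m' _; rewrite big_distrr.
under eq_bigr => m _ do under eq_bigr => m' _ do rewrite root_unity_orthogonal //.
under eq_bigr => m _ do rewrite (big_ord_delta (fun m' => Cmul (z m) (Cconj (z m')))) //.
by rewrite Re_sum Rsum_mull; apply: eq_bigr => m _; rewrite Cnorm2E /=; ring.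
Qed.

Let HKle : (K <= N)%nat. Proof. by lia. Qed.

Lemma idft_zero_ext v m : idft N (zero_ext K v) m
  = \big[Cadd/C0]_(s < K) Cmul (v s) (Cconj (root_unity N (s * m))).
Proof.
rewrite (big_ord_widen _ (fun s => Cmul (v s) (Cconj (root_unity N (s * m)))) HKle).
rewrite [RHS]big_mkcond; apply: eq_bigr => s _; rewrite /zero_ext mulnC.
by case: ifP => // _; Cring.
Qed.

Lemma Rsum_zero_ext v :
  \big[Rplus/0]_(s < N) Cnorm2 (zero_ext K v s) = \big[Rplus/0]_(s < K) Cnorm2 (v s).
Proof.
rewrite (big_ord_widen _ (fun s => Cnorm2 (v s)) HKle) [RHS]big_mkcond.
by apply: eq_bigr => s _; rewrite /zero_ext; case: ifP => //= _; rewrite /Cnorm2 /=; ring.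
Qed.

(* The Hankel product is a circular convolution of length N, which the DFT diagonalizes. *)
Lemma dft_idft_hankel (h v : nat -> Cx) r : (r < K)%nat ->
  \big[Cadd/C0]_(m < N)
      Cmul (Cmul (dft N h m) (idft N (zero_ext K v) m)) (Cconj (root_unity N (r * m)))
  = Cmul (RtoC (INR N)) (\big[Cadd/C0]_(s < K) Cmul (h (r + s)%nat) (v s)).
Proof.
move=> Hr.
under eq_bigr => m _ do rewrite idft_zero_ext.
transitivity (\big[Cadd/C0]_(m < N) \big[Cadd/C0]_(a < N) \big[Cadd/C0]_(s < K)
   Cmul (Cmul (Cmul (h a) (root_unity N (a * m)))
              (Cmul (v s) (Cconj (root_unity N (s * m)))))
        (Cconj (root_unity N (r * m)))).
  apply: eq_bigr => m _; rewrite /dft big_distrl big_distrl; apply: eq_bigr => a _.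
  by rewrite big_distrr big_distrl.
rewrite exchange_big.
under eq_bigr => a _ do rewrite exchange_big.
rewrite exchange_big big_distrr; apply: eq_bigr => s _.
transitivity (\big[Cadd/C0]_(a < N) Cmul (Cmul (h a) (v s))
   (\big[Cadd/C0]_(m < N) Cmul (root_unity N (a * m)) (Cconj (root_unity N ((r + s)%nat * m))))).
  apply: eq_bigr => a _; rewrite big_distrr; apply: eq_bigr => m _.
  by rewrite mulnDl root_unityD // Cconj_mul; Cring.
have Hrs : (r + s < N)%nat by have := ltn_ord s; lia.
under eq_bigr => a _ do rewrite root_unity_orthogonal //.
by rewrite (big_ord_delta (fun a => Cmul (h a) (v s))) //; Cring.
Qed.

(* Plancherel on both sides of dft_idft_hankel. *)
Lemma hankel_norm2_le (h v : nat -> Cx) M2 : 0 <= M2 ->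
  (forall m, (m < N)%nat -> Cnorm2 (dft N h m) <= M2) ->
  \big[Rplus/0]_(r < K) Cnorm2 (\big[Cadd/C0]_(s < K) Cmul (h (r + s)%nat) (v s))
  <= M2 * \big[Rplus/0]_(s < K) Cnorm2 (v s).
Proof.
move=> HM HM2; have HNR : 0 < INR N by apply: lt_0_INR; lia.
set z := fun m => Cmul (dft N h m) (idft N (zero_ext K v) m).
apply: (Rmult_le_reg_l (INR N * INR N)); first nra.
rewrite Rsum_mull.
under eq_bigr => r _ do rewrite -Cnorm2_RtoC -Cnorm2_mul -(dft_idft_hankel h v (ltn_ord r)).
apply: Rle_trans; first apply: (@Rsum_widen_le K N (fun r => Cnorm2 (idft N z r)) HKle).
  by move=> ?; apply: Cnorm2_ge0.
rewrite idft_parseval.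
have Hv := idft_parseval (zero_ext K v); rewrite Rsum_zero_ext in Hv.
have Hz : \big[Rplus/0]_(m < N) Cnorm2 (z m)
          <= M2 * \big[Rplus/0]_(m < N) Cnorm2 (idft N (zero_ext K v) m).
  rewrite Rsum_mull; apply: Rsum_le => m _; rewrite Cnorm2_mul.
  by apply: Rmult_le_compat_r; [exact: Cnorm2_ge0 | exact: HM2].
apply: Rle_trans (Rmult_le_compat_l _ _ _ (Rlt_le _ _ HNR) Hz) _.
by rewrite Hv; right; ring.
Qed.

End Hankel.

(* [/ 0 = 0] in Rocq, so no positivity is needed. *)
Lemma Rinv_ge0 x : 0 <= x -> 0 <= / x.
Proof. by case/Rle_lt_or_eq_dec => [/Rinv_0_lt_compat|<-]; rewrite ?Rinv_0; lra. Qed.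

Lemma exp_le_compat x y : x <= y -> exp x <= exp y.
Proof. by case/Rle_lt_or_eq_dec => [/exp_increasing|->]; lra. Qed.

Lemma exp_le_quadratic x : -1 <= x <= 1 -> exp x <= 1 + x + 3 * (x * x).
Proof.
move=> Hx; have Hp := exp_pos x; have H2 := exp_ineq1_le x.
have H1 : (1 - x) * exp x <= 1.
  have := exp_ineq1_le (- x); rewrite exp_Ropp => H.
  have : (1 + - x) * exp x <= / exp x * exp x by apply: Rmult_le_compat_r; lra.
  by rewrite Rinv_l; lra.
case: (Rle_lt_dec x 0) => Hs; first nra.
have : exp x <= 3 by apply: Rle_trans exp_le_3; apply: exp_le_compat; lra.
nra.
Qed.

(* The left-hand side is E exp(y (1{x in Om}/p - 1)) for one coordinate x. *)
Lemma bernoulli_mgf_le p y : 0 < p <= 1 -> Rabs y <= p ->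
  p * exp (y * (/ p - 1)) + (1 - p) * exp (- y) <= exp (3 * (y * y) / p).
Proof.
move=> Hp Hy0; have Hy : - p <= y <= p.
  by split; [have := Rle_abs (- y); rewrite Rabs_Ropp | have := Rle_abs y]; lra.
have Hyp : -1 <= y / p <= 1.
  by split; apply: (Rmult_le_reg_r p); try lra; rewrite /Rdiv Rmult_assoc Rinv_l; lra.
have Hx1 : -1 <= y * (/ p - 1) <= 1.
  have -> : y * (/ p - 1) = (y / p) * (1 - p) by field; lra.
  by split; nra.
have B1 := exp_le_quadratic Hx1.
have B0 : exp (- y) <= 1 + - y + 3 * (- y * - y) by apply: exp_le_quadratic; lra.
apply: Rle_trans (_ : _ <= 1 + 3 * (y * y) / p) _; last first.
  by have := exp_ineq1_le (3 * (y * y) / p); lra.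
have E : p * (1 + y * (/ p - 1) + 3 * (y * (/ p - 1) * (y * (/ p - 1))))
         + (1 - p) * (1 + - y + 3 * (- y * - y))
         = 1 + 3 * (y * y) / p - 3 * (y * y).
  by field; lra.
have : p * exp (y * (/ p - 1)) <= p * (1 + y * (/ p - 1) + 3 * (y * (/ p - 1) * (y * (/ p - 1)))).
  by apply: Rmult_le_compat_l; lra.
have : (1 - p) * exp (- y) <= (1 - p) * (1 + - y + 3 * (- y * - y)).
  by apply: Rmult_le_compat_l; lra.
nra.
Qed.

Lemma bernstein_exponent_le p A B L Q : 0 < p -> 0 <= A -> 0 <= B -> 0 < A + B ->
  0 <= L -> 0 <= Q -> L * Q <= p * (A * A) ->
  - (L / (A + B) * (6 * (A + B))) + 3 * (L / (A + B) * (L / (A + B)) * Q) / p <= - (3 * L).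
Proof.
move=> Hp HA HB HAB HL HQ0 HQ.
have -> : L / (A + B) * (6 * (A + B)) = 6 * L by field; lra.
suff : L / (A + B) * (L / (A + B)) * Q / p <= L by lra.
(* L^2 Q / ((A + B)^2 p) <= L A^2 / (A + B)^2 <= L *)
have -> : L / (A + B) * (L / (A + B)) * Q / p = L / ((A + B) * (A + B) * p) * (L * Q).
  by field; lra.
apply: Rle_trans (_ : _ <= L / ((A + B) * (A + B) * p) * (p * (A * A))) _.
  apply: Rmult_le_compat_l => //; apply: Rmult_le_pos => //.
  by left; apply: Rinv_0_lt_compat; apply: Rmult_lt_0_compat; nra.
have -> : L / ((A + B) * (A + B) * p) * (p * (A * A)) = L * (A * A / ((A + B) * (A + B))).
  by field; lra.
have : A * A / ((A + B) * (A + B)) <= 1.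
  apply: (Rmult_le_reg_r ((A + B) * (A + B))); first nra.
  by rewrite /Rdiv Rmult_assoc Rinv_l; nra.
nra.
Qed.

(** * The Bernoulli model on a finite set *)

Lemma indic_T (P : Prop) : P -> indic P = 1.
Proof. by rewrite /indic; case: excluded_middle_informative. Qed.
Lemma indic_F (P : Prop) : ~ P -> indic P = 0.
Proof. by rewrite /indic; case: excluded_middle_informative. Qed.
Lemma indic_01 (P : Prop) : 0 <= indic P <= 1.
Proof. by rewrite /indic; case: (excluded_middle_informative P) => ? /=; split; lra. Qed.

Section Bernoulli.

Variables (T : finType) (p : R).
Hypothesis Hp : 0 < p <= 1.

Definition bweight (Om : {set T}) : R := p ^ #|Om| * (1 - p) ^ (#|T| - #|Om|)%N.

Definition bexpect (X : {set T} -> R) : R := \big[Rplus/0]_(Om : {set T}) (bweight Om * X Om).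

Definition bprob (E : {set T} -> Prop) : R := bexpect (fun Om => indic (E Om)).

(* The entry of (1/p) P_Om - Id at x; it has mean zero. *)
Definition bern_dev (Om : {set T}) (x : T) : R := if x \in Om then / p - 1 else -1.

Lemma bweightE Om : bweight Om = \big[Rmult/1]_(x : T) (if x \in Om then p else 1 - p).
Proof.
rewrite (bigID (fun x => x \in Om)) /=.
rewrite (eq_bigr (fun _ => p)); last by move=> x ->.
rewrite [X in _ * X](eq_bigr (fun _ => 1 - p)); last by move=> x /negbTE ->.
have iter_pow x k : iter k (Rmult x) 1 = x ^ k by elim: k => //= k ->.
rewrite !big_const !iter_pow /bweight; congr (_ ^ _ * _ ^ _).
by have := cardC (mem Om); rewrite /= => <-; rewrite addKn.
Qed.

Lemma bweight_ge0 Om : 0 <= bweight Om.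
Proof. by rewrite bweightE; apply: Rprod_ge0 => x; case: ifP => _; lra. Qed.

Lemma bexpect_prod (f g : T -> R) :
  bexpect (fun Om => \big[Rmult/1]_(x : T) (if x \in Om then f x else g x))
  = \big[Rmult/1]_(x : T) (p * f x + (1 - p) * g x).
Proof.
rewrite -Rsum_set_prod; apply: eq_bigr => Om _.
by rewrite bweightE Rprod_mul; apply: eq_bigr => x _; case: ifP.
Qed.

Lemma bexpect_le (X Y : {set T} -> R) : (forall Om, X Om <= Y Om) -> bexpect X <= bexpect Y.
Proof. by move=> H; apply: Rsum_le => Om _; apply: Rmult_le_compat_l; [apply: bweight_ge0 | apply: H]. Qed.

Lemma bexpect_scale c (X : {set T} -> R) : bexpect (fun Om => c * X Om) = c * bexpect X.
Proof. by rewrite /bexpect Rsum_mull; apply: eq_bigr => Om _; ring. Qed.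

Lemma bexpectB (X Y : {set T} -> R) :
  bexpect (fun Om => X Om - Y Om) = bexpect X - bexpect Y.
Proof.
have -> : bexpect X - bexpect Y = bexpect X + bexpect (fun Om => -1 * Y Om).
  by rewrite bexpect_scale; ring.
by rewrite /bexpect -big_split /=; apply: eq_bigr => Om _; ring.
Qed.

Lemma bexpect_Rsum (I : finType) (X : I -> {set T} -> R) :
  bexpect (fun Om => \big[Rplus/0]_(i : I) X i Om) = \big[Rplus/0]_(i : I) bexpect (X i).
Proof.
by rewrite /bexpect (eq_bigr _ (fun Om _ => Rsum_mull _ _ (bweight Om))) exchange_big.
Qed.

Lemma bexpect1 : bexpect (fun _ => 1) = 1.
Proof.
transitivity (bexpect (fun Om => \big[Rmult/1]_(x : T) (if x \in Om then 1 else 1))).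
  by apply: eq_bigr => Om _; rewrite big1 // => x _; case: ifP.
by rewrite bexpect_prod big1 // => x _; ring.
Qed.

Lemma bprob_le1 E : bprob E <= 1.
Proof. by rewrite -bexpect1; apply: bexpect_le => Om; case: (indic_01 (E Om)). Qed.

Lemma bprob_union_bound (E : {set T} -> Prop) (I : finType) (F : I -> {set T} -> Prop) :
  (forall Om, (forall i, ~ F i Om) -> E Om) ->
  1 - \big[Rplus/0]_(i : I) bprob (F i) <= bprob E.
Proof.
move=> HE; rewrite -bexpect1 -bexpect_Rsum -bexpectB; apply: bexpect_le => Om /=.
case: (classic (exists i, F i Om)) => [[i Hi]|Hn].
  rewrite (bigD1 i) //= indic_T //.
  have : 0 <= \big[Rplus/0]_(j | j != i) indic (F j Om).
    by apply: Rsum_ge0 => j _; case: (indic_01 (F j Om)).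
  by have := indic_01 (E Om); lra.
rewrite indic_T; last by apply: HE => i Hi; apply: Hn; exists i.
have : 0 <= \big[Rplus/0]_(j : I) indic (F j Om).
  by apply: Rsum_ge0 => j _; case: (indic_01 (F j Om)).
lra.
Qed.

Lemma bprob_exp_markov (X : {set T} -> R) t lam : 0 <= lam ->
  bprob (fun Om => t < X Om) <= exp (- (lam * t)) * bexpect (fun Om => exp (lam * X Om)).
Proof.
move=> Hlam; rewrite -bexpect_scale; apply: bexpect_le => Om.
rewrite -exp_plus; case: (classic (t < X Om)) => Ht.
  rewrite indic_T //; have := exp_ineq1_le (- (lam * t) + lam * X Om); nra.
by rewrite indic_F //; left; apply: exp_pos.
Qed.

Lemma bexpect_exp_dev_le (y : T -> R) : (forall x, Rabs (y x) <= p) ->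
  bexpect (fun Om => exp (\big[Rplus/0]_(x : T) (bern_dev Om x * y x)))
  <= exp (3 * \big[Rplus/0]_(x : T) (y x * y x) / p).
Proof.
move=> Hy.
have -> : bexpect (fun Om => exp (\big[Rplus/0]_(x : T) (bern_dev Om x * y x)))
  = bexpect (fun Om => \big[Rmult/1]_(x : T)
      (if x \in Om then exp (y x * (/ p - 1)) else exp (- y x))).
  apply: eq_bigr => Om _; rewrite exp_Rsum; congr (_ * _); apply: eq_bigr => x _.
  by rewrite /bern_dev; case: ifP => _; congr exp; ring.
rewrite bexpect_prod.
have -> : 3 * \big[Rplus/0]_(x : T) (y x * y x) / p
          = \big[Rplus/0]_(x : T) (3 * (y x * y x) / p).
  transitivity (3 / p * \big[Rplus/0]_(x : T) (y x * y x)); first by field; lra.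
  by rewrite Rsum_mull; apply: eq_bigr => x _; field; lra.
rewrite exp_Rsum; apply: Rprod_le => x; split; last exact: bernoulli_mgf_le.
by have := exp_pos (y x * (/ p - 1)); have := exp_pos (- y x); nra.
Qed.

Lemma bprob_dev_sum_gt_exp (r : T -> R) t lam : 0 <= lam ->
  (forall x, Rabs (lam * r x) <= p) ->
  bprob (fun Om => t < \big[Rplus/0]_(x : T) (bern_dev Om x * r x))
  <= exp (- (lam * t) + 3 * (lam * lam * \big[Rplus/0]_(x : T) (r x * r x)) / p).
Proof.
move=> Hlam Hy; apply: Rle_trans (bprob_exp_markov _ _ Hlam) _.
have -> : bexpect (fun Om => exp (lam * \big[Rplus/0]_(x : T) (bern_dev Om x * r x)))
  = bexpect (fun Om => exp (\big[Rplus/0]_(x : T) (bern_dev Om x * (lam * r x)))).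
  by apply: eq_bigr => Om _; rewrite Rsum_mull; congr (_ * exp _); apply: eq_bigr => x _; ring.
apply: Rle_trans (Rmult_le_compat_l _ _ _ (Rlt_le _ _ (exp_pos _)) (bexpect_exp_dev_le Hy)) _.
rewrite -exp_plus; have -> : \big[Rplus/0]_(x : T) (lam * r x * (lam * r x))
                              = lam * lam * \big[Rplus/0]_(x : T) (r x * r x).
  by rewrite Rsum_mull; apply: eq_bigr => x _; ring.
exact: Rle_refl.
Qed.

(* A Bernstein-type tail bound: A^2 / L plays the role of the variance proxy and
   B / L that of the range. *)
Lemma bprob_dev_sum_gt (r : T -> R) A B L :
  0 <= A -> 0 <= B -> 0 <= L ->
  L * \big[Rplus/0]_(x : T) (r x * r x) <= p * (A * A) ->
  (forall x, L * Rabs (r x) <= p * B) ->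
  bprob (fun Om => 6 * (A + B) < \big[Rplus/0]_(x : T) (bern_dev Om x * r x))
  <= exp (- (3 * L)).
Proof.
move=> HA HB HL HQ Hr.
case: (Rle_lt_or_eq_dec _ _ HL) => [{}HL|<-]; last first.
  by rewrite Rmult_0_r Ropp_0 exp_0; apply: bprob_le1.
have HAB0 : 0 <= A + B by lra.
case: (Rle_lt_or_eq_dec _ _ HAB0) => [HAB|HAB]; last first.
  have Hr0 x : r x = 0.
    have Hrx : Rabs (r x) <= 0 by have := Hr x; have := Rabs_pos (r x); nra.
    by apply: NNPP => /Rabs_no_R0; have := Rabs_pos (r x); lra.
  apply: Rle_trans (_ : _ <= 0) _; last by left; apply: exp_pos.
  rewrite /bprob /bexpect big1 => [|Om _]; first exact: Rle_refl.
  rewrite indic_F ?Rmult_0_r // big1 => [|x _]; [lra | by rewrite Hr0 Rmult_0_r].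
have Hlam : 0 <= L / (A + B) by apply: Rmult_le_pos; [lra | left; apply: Rinv_0_lt_compat].
apply: Rle_trans (bprob_dev_sum_gt_exp _ Hlam _) _.
  move=> x; rewrite Rabs_mult (Rabs_pos_eq _ Hlam).
  apply: (Rmult_le_reg_l (A + B)) => //.
  have -> : (A + B) * (L / (A + B) * Rabs (r x)) = L * Rabs (r x) by field; lra.
  by have := Hr x; nra.
apply: exp_le_compat.
have HQ0 : 0 <= \big[Rplus/0]_(x : T) (r x * r x) by apply: Rsum_ge0 => x _; nra.
by apply: bernstein_exponent_le => //; lra.
Qed.

End Bernoulli.

(** * The deviation operator is block-diagonal Hankel *)

Definition ord_ext (n : nat) (F : 'I_n -> Cx) (t : nat) : Cx :=
  \big[Cadd/C0]_(a : 'I_n) (if (a : nat) == t then F a else C0).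

Lemma n1_add_n1 n : odd n -> (n1 n + n1 n)%nat = n.+1.
Proof.
move=> Ho; rewrite /n1 {1 2 3}(odd_halfE Ho).
have -> : (n./2 + n./2).+2 = (n./2.+1).*2 by rewrite -addnn addnS addSn.
by rewrite doubleK addnn.
Qed.

Section DevOp.

Variables (d n : nat) (p : R) (Om : {set ('I_d * 'I_n)%type}) (Z : bmat d n).

Definition dev_symbol (i : 'I_d) (a : 'I_n) : Cx :=
  Cmul (\big[Cadd/C0]_(j : 'I_d)
          Cmul (RtoC (bern_dev p Om (j, a))) (Cmul (DFT i j) (Ghat_adj Z j a)))
       (RtoC (/ sqrt (INR (wgt a)))).

Lemma dev_op_entry i r i' s : p <> 0 ->
  dev_op p Om Z (i, r) (i', s) = if i == i' then ord_ext (dev_symbol i) (r + s) else C0.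
Proof.
move=> Hp0; rewrite /dev_op /msub /mscale /Ghat /=.
case: ifP => [/eqP Hii|_]; last by Cring.
subst i'.
rewrite /Csub /Csum big_distrr Copp_sum -big_split /ord_ext.
apply: eq_bigr => a _.
rewrite big_distrl big_distrl big_distrr Copp_sum -big_split /=.
case: eqP => [Ha|Ha].
  rewrite /dev_symbol big_distrl; apply: eq_bigr => j _.
  rewrite /Gmat /POm /bern_dev /= -Ha eqxx.
  by case: ifP => _; move: (DFT i j) (Ghat_adj Z j a) (/ sqrt (INR (wgt a))) => u v w;
    apply: Cx_ext => /=; rewrite /Ghat_adj; field.
rewrite big1 // => j _; rewrite /Gmat /=.
by case: eqP => [Hb|_]; [case: Ha; rewrite -Hb | Cring].
Qed.

Lemma dev_op_mat_vec (v : vec ('I_d * 'I_(n1 n))%type) i r : p <> 0 ->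
  mat_vec (dev_op p Om Z) v (i, r)
  = \big[Cadd/C0]_(s : 'I_(n1 n)) Cmul (ord_ext (dev_symbol i) (r + s)) (v (i, s)).
Proof.
move=> Hp0; rewrite /mat_vec /Csum big_pair (bigD1 i) //= [X in Cadd _ X]big1.
  have -> : forall x, Cadd x C0 = x by move=> x; Cring.
  by apply: eq_bigr => s _; rewrite dev_op_entry // eqxx.
move=> i' Hi'; apply: big1 => s _; rewrite dev_op_entry //.
by case: eqP => [E|_]; [rewrite E eqxx in Hi' | Cring].
Qed.

(* Each diagonal block is the Hankel matrix of the symbol of length n = 2 n1 - 1. *)
Lemma dev_op_spec_norm_le M : odd n -> p <> 0 -> 0 <= M ->
  (forall i m, (m < n)%nat -> Cnorm2 (dft n (ord_ext (dev_symbol i)) m) <= M * M) ->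
  spec_norm_le (dev_op p Om Z) M.
Proof.
move=> Ho Hp0 HM Hb v.
have key : Rsum (fun x => Cnorm2 (mat_vec (dev_op p Om Z) v x))
           <= (M * M) * Rsum (fun x => Cnorm2 (v x)).
  rewrite /Rsum big_pair (big_pair _ (fun x => Cnorm2 (v x))) Rsum_mull.
  apply: Rsum_le => i _.
  under eq_bigr => r _ do rewrite dev_op_mat_vec //.
  set vi := ord_ext (fun s => v (i, s)).
  have Hvi (s : 'I_(n1 n)) : vi s = v (i, s) by rewrite /vi /ord_ext big_ord_pick.
  have H := @hankel_norm2_le _ _ Ho (n1_add_n1 Ho) _ vi _ (Rle_0_sqr M) (Hb i).
  under eq_bigr => r _ do under eq_bigr => s _ do rewrite -Hvi.
  apply: Rle_trans H _; right; congr (_ * _); apply: eq_bigr => s _; by rewrite Hvi.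
apply: Rle_trans (sqrt_le_1_alt _ _ key) _.
by rewrite /vnorm sqrt_mult_alt ?sqrt_square //; [lra | apply: Rle_0_sqr].
Qed.

Definition dev_term (i : 'I_d) (m : nat) (x : 'I_d * 'I_n) : Cx :=
  Cmul (Cmul (DFT i x.1) (Ghat_adj Z x.1 x.2))
       (Cmul (RtoC (/ sqrt (INR (wgt x.2)))) (root_unity n (x.2 * m))).

Lemma dft_dev_symbol i m : dft n (ord_ext (dev_symbol i)) m
  = \big[Cadd/C0]_(x : 'I_d * 'I_n) Cmul (RtoC (bern_dev p Om x)) (dev_term i m x).
Proof.
rewrite /dft.
under eq_bigr => a _ do rewrite /ord_ext big_ord_pick /dev_symbol big_distrl big_distrl.
rewrite exchange_big big_pair; apply: eq_bigr => j _; apply: eq_bigr => a _.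
rewrite /dev_term /=.
move: (DFT i j) (Ghat_adj Z j a) (RtoC _) (root_unity _ _) (RtoC (bern_dev p Om (j, a))).
by move=> u1 u2 u3 u4 u5; Cring.
Qed.

End DevOp.

(** * Reduction to scalar tail bounds *)

Definition signed_part (b1 b2 : bool) (z : Cx) : R :=
  (if b2 then -1 else 1) * (if b1 then Im z else Re z).

Lemma signed_part_sum (I : finType) (c : I -> R) (w : I -> Cx) b1 b2 :
  signed_part b1 b2 (\big[Cadd/C0]_(i : I) Cmul (RtoC (c i)) (w i))
  = \big[Rplus/0]_(i : I) (c i * signed_part b1 b2 (w i)).
Proof.
rewrite /signed_part; case: b1; rewrite ?Re_sum ?Im_sum Rsum_mull.
  by apply: eq_bigr => i _ /=; ring.
by apply: eq_bigr => i _ /=; ring.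
Qed.

Lemma signed_part_sq_le b1 b2 z : signed_part b1 b2 z * signed_part b1 b2 z <= Cnorm2 z.
Proof. by rewrite /signed_part /Cnorm2; case: b1; case: b2; nra. Qed.

Lemma Rabs_signed_part_le b1 b2 z : Rabs (signed_part b1 b2 z) <= Cabs z.
Proof.
rewrite /signed_part Rabs_mult.
have -> : Rabs (if b2 then -1 else 1) = 1 by case: b2; rewrite ?Rabs_Ropp Rabs_R1.
by rewrite Rmult_1_l; case: b1; [apply: Im_le_Cabs | apply: Re_le_Cabs].
Qed.

Lemma Cnorm2_le_signed_parts z t :
  (forall b1 b2, signed_part b1 b2 z <= t) -> Cnorm2 z <= 2 * (t * t).
Proof.
move=> H; move: (H false false) (H false true) (H true false) (H true true).
by rewrite /signed_part /Cnorm2 /= => *; nra.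
Qed.

Lemma Rmaxf_ub (T : finType) (f : T -> R) t : f t <= Rmaxf f.
Proof.
rewrite /Rmaxf; have : t \in index_enum T by rewrite mem_index_enum.
elim: (index_enum T) => [//|y s IH].
rewrite inE big_cons => /orP [/eqP <-|Hs]; first exact: Rmax_l.
by apply: Rle_trans (IH Hs) _; apply: Rmax_r.
Qed.

Lemma Rmaxf_ge0 (T : finType) (f : T -> R) : 0 <= Rmaxf f.
Proof.
rewrite /Rmaxf; elim: (index_enum T) => [|y s IH]; first by rewrite big_nil; lra.
by rewrite big_cons; apply: Rle_trans IH (Rmax_r _ _).
Qed.

Section Norms.

Variables (d n : nat) (Z : bmat d n).

Lemma Cnorm2_dev_term i m x :
  Cnorm2 (dev_term Z i m x) = / (INR d * INR (wgt x.2)) * Cnorm2 (Ghat_adj Z x.1 x.2).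
Proof.
have inv_sqrt_sq y : 0 <= y -> / sqrt y * / sqrt y = / y.
  by move=> Hy; rewrite -Rinv_mult sqrt_sqrt.
rewrite /dev_term /DFT /root_unity !Cnorm2_mul !Cnorm2_RtoC !Cnorm2_expi.
by rewrite Rinv_mult !inv_sqrt_sq; [ring | apply: pos_INR | apply: pos_INR].
Qed.

Lemma Cabs_dev_term i m x :
  Cabs (dev_term Z i m x) = / sqrt (INR d * INR (wgt x.2)) * Cabs (Ghat_adj Z x.1 x.2).
Proof.
rewrite /Cabs Cnorm2_dev_term sqrt_mult_alt ?sqrt_inv //.
by apply: Rinv_ge0; apply: Rmult_le_pos; apply: pos_INR.
Qed.

Lemma normGF_sq : normGF Z * normGF Z
  = \big[Rplus/0]_(x : 'I_d * 'I_n) (/ (INR d * INR (wgt x.2)) * Cnorm2 (Ghat_adj Z x.1 x.2)).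
Proof.
rewrite /normGF sqrt_sqrt //; apply: Rsum_ge0 => x _.
by apply: Rmult_le_pos; [apply: Rinv_ge0; apply: Rmult_le_pos; apply: pos_INR | apply: Cnorm2_ge0].
Qed.

Lemma signed_dev_term_sq_sum_le b1 b2 i m :
  \big[Rplus/0]_(x : 'I_d * 'I_n) (signed_part b1 b2 (dev_term Z i m x) * signed_part b1 b2 (dev_term Z i m x))
  <= normGF Z * normGF Z.
Proof.
by rewrite normGF_sq; apply: Rsum_le => x _; rewrite -(Cnorm2_dev_term i m); apply: signed_part_sq_le.
Qed.

Lemma Rabs_signed_dev_term_le b1 b2 i m x :
  Rabs (signed_part b1 b2 (dev_term Z i m x)) <= normGinf Z.
Proof.
apply: Rle_trans (Rabs_signed_part_le _ _ _) _; rewrite Cabs_dev_term.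
exact: (Rmaxf_ub (fun jk : 'I_d * 'I_n =>
  / sqrt (INR d * INR (wgt jk.2)) * Cabs (minner Z (Ghat_jk jk.1 jk.2))) x).
Qed.

End Norms.

Lemma bern_probE d n p (E : {set 'I_d * 'I_n} -> Prop) :
  bern_prob p E = bprob p E.
Proof. by rewrite /bern_prob /bprob /bexpect /bweight card_prod !card_ord. Qed.

Lemma dev_op_spec_norm_le_signed d n p Om (Z : bmat d n) t : odd n -> p <> 0 -> 0 <= t ->
  (forall i (m : 'I_n) b1 b2,
     \big[Rplus/0]_(x : 'I_d * 'I_n) (bern_dev p Om x * signed_part b1 b2 (dev_term Z i m x)) <= t) ->
  spec_norm_le (dev_op p Om Z) (3 / 2 * t).
Proof.
move=> Ho Hp0 Ht Hb; apply: dev_op_spec_norm_le => // [|i m Hm]; first lra.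
rewrite dft_dev_symbol; apply: Rle_trans (Cnorm2_le_signed_parts (t := t) _) _; last nra.
by move=> b1 b2; rewrite signed_part_sum; apply: (Hb i (Ordinal Hm)).
Qed.

Lemma bprob_signed_dev_gt d n p (Z : bmat d n) L i m b1 b2 : 0 < p <= 1 -> 0 <= L ->
  bprob p (fun Om => 6 * (sqrt (L / p) * normGF Z + L / p * normGinf Z)
     < \big[Rplus/0]_(x : 'I_d * 'I_n) (bern_dev p Om x * signed_part b1 b2 (dev_term Z i m x)))
  <= exp (- (3 * L)).
Proof.
move=> Hp HL; have HLp : 0 <= L / p by apply: Rmult_le_pos => //; apply: Rinv_ge0; lra.
apply: bprob_dev_sum_gt => //.
- by apply: Rmult_le_pos; apply: sqrt_pos.
- by apply: Rmult_le_pos => //; apply: Rmaxf_ge0.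
- apply: Rle_trans (Rmult_le_compat_l _ _ _ HL (signed_dev_term_sq_sum_le _ _ _ _ _)) _.
  right; have -> : sqrt (L / p) * normGF Z * (sqrt (L / p) * normGF Z)
                   = sqrt (L / p) * sqrt (L / p) * (normGF Z * normGF Z) by ring.
  by rewrite sqrt_sqrt //; field; lra.
- move=> x; have -> : p * (L / p * normGinf Z) = L * normGinf Z by field; lra.
  by apply: Rmult_le_compat_l => //; apply: Rabs_signed_dev_term_le.
Qed.

Lemma ln_INR_ge0 k : (0 < k)%nat -> 0 <= ln (INR k).
Proof.
move=> Hk0; have Hk : 1 <= INR k by apply: (le_INR 1); apply/leP.
rewrite -ln_1.
by case: (Rle_lt_or_eq_dec _ _ Hk) => [?|<-]; [left; apply: ln_increasing | right]; lra.
Qed.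

Lemma Rmul_exp_neg3_ln x : 0 < x -> x * exp (- (3 * ln x)) = Rpower x (- 2).
Proof. by move=> Hx; rewrite /Rpower -{1}(exp_ln x Hx) -exp_plus; congr exp; ring. Qed.

Theorem lemma4p3 :
  exists C c1 c2 : R, 0 < C /\ 0 < c1 /\ 0 < c2 /\
  forall (d n : nat) (p : R) (Z : bmat d n),
    (0 < d)%nat -> odd n -> 0 < p <= 1 -> is_block_diag Z ->
    bern_prob p (fun Om : {set (('I_d * 'I_n)%type)} =>
      spec_norm_le (dev_op p Om Z)
        (C * (sqrt (ln (INR (d * n)%nat) / p) * normGF Z
              + ln (INR (d * n)%nat) / p * normGinf Z)))
    >= 1 - c1 * Rpower (INR (d * n)%nat) (- c2).
Proof.
exists 9, 4, 2; do 3!(split; first lra).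
move=> d n p Z Hd Ho Hp _.
have Hdn : (0 < d * n)%nat by rewrite muln_gt0 Hd (odd_halfE Ho).
set L := ln (INR (d * n)).
have HL : 0 <= L := ln_INR_ge0 Hdn.
set t := sqrt (L / p) * normGF Z + L / p * normGinf Z.
have HLp : 0 <= L / p by apply: Rmult_le_pos => //; apply: Rinv_ge0; lra.
have Ht : 0 <= t.
  by apply: Rplus_le_le_0_compat; apply: Rmult_le_pos => //;
    [apply: sqrt_pos | apply: sqrt_pos | apply: Rmaxf_ge0].
set E := fun (k : 'I_d * 'I_n * bool * bool) Om => 6 * t <
  \big[Rplus/0]_(x : 'I_d * 'I_n) (bern_dev p Om x * signed_part k.1.2 k.2 (dev_term Z k.1.1.1 k.1.1.2 x)).
rewrite bern_probE; apply: Rle_ge; apply: Rle_trans (bprob_union_bound Hp (F := E) _).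
  apply/Rplus_le_compat_l/Ropp_le_contravar.
  apply: Rle_trans (_ : _ <= \big[Rplus/0]_(k : 'I_d * 'I_n * bool * bool) exp (- (3 * L))) _.
    by apply: Rsum_le => k _; apply: bprob_signed_dev_gt.
  rewrite Rsum_const !card_prod card_bool !card_ord mult_INR -Rmul_exp_neg3_ln.
    by right; rewrite /L mult_INR /=; ring.
  by apply: lt_0_INR; apply/ltP.
move=> Om HE; have -> : 9 * t = 3 / 2 * (6 * t) by field.
apply: dev_op_spec_norm_le_signed => //; [lra | lra | move=> i m b1 b2].
exact: (Rnot_lt_le _ _ (HE (i, m, b1, b2))).
Qed.
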